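(* Let $P_1\subseteq P_2$ be meet semilattices with $0$ such that $P_1$ is downward closed in $P_2$. Then $P_1\subseteq P_2$ preserves finite covers and is tight; that is, the map $U\mapsto re^{-1}(U)$ identifies $\mathcal T_c(P_1)$ with an ideal of $\mathcal T_c(P_2)$, via $V^{P_1}_x\mapsto V^{P_2}_x$ for $x\in P_1$.
   Context: A meet semilattice with $0$ is a meet semilattice with least element $0$; $P_1\subseteq P_2$ means an injective meet- and $0$-preserving map identifying $P_1$ with a subset of $P_2$; downward closed means containing all elements below any of its elements. A filter of $P$ is a subset $F$ with $\emptyset\ne F\ne P$, closed upwards and under $\wedge$; $F(P)$ has the topology generated by $U_x=\{F:x\in F\}$, with basis of compact open sets $U_{(x:x_1,\dots,x_n)}=\{F:x\in F,\ x_1,\dots,x_n\notin F\}$. The tight filters $T(P)$ are the closure of the ultrafilters in $F(P)$; $V^P_{(x:x_1,\dots,x_n)}=U_{(x:x_1,\dots,x_n)}\cap T(P)$, $V^P_x=V^P_{(x:)}$. $\mathcal T_c(P)$ is the generalized Boolean algebra of compact open subsets of $T(P)$. A finite cover of $x\in P$ is a finite set of elements $\le x$ such that every $0\ne y\le x$ meets one of them nontrivially; $P_1\subseteq P_2$ preserves finite covers if every finite cover in $P_1$ of $x\in P_1$ is a finite cover of $x$ in $P_2$. In that case $re:T(P_2)\dashrightarrow T(P_1)$, $\xi\mapsto\xi\cap P_1$ (defined when nonempty), is a partial map to tight filters and $U\mapsto re^{-1}(U)$ is an injective generalized Boolean algebra morphism $\mathcal T_c(P_1)\to\mathcal T_c(P_2)$;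 $P_1\subseteq P_2$ is called tight if its image is an ideal (closed under unions and under intersection with arbitrary elements of $\mathcal T_c(P_2)$). *)

From HB Require Import structures.
From mathcomp Require Import all_boot all_order.
Set Implicit Arguments. Unset Strict Implicit. Unset Printing Implicit Defensive.
Import Order.Theory.
Local Open Scope order_scope.

Section TightFilters.
Variables (d : Order.disp_t) (P : bMeetSemilatticeType d).

Definition is_filter (F : P -> Prop) : Prop :=
  (exists x, F x) /\ (exists x, ~ F x) /\
  (forall x y, F x -> x <= y -> F y) /\
  (forall x y, F x -> F y -> F (x `&` y)).

Definition basicU (x : P) (xs : seq P) (F : P -> Prop) : Prop :=
  is_filter F /\ F x /\ (forall y, y \in xs -> ~ F y).

Definition is_ultrafilter (F : P -> Prop) : Prop :=
  is_filter F /\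
  forall G, is_filter G -> (forall x, F x -> G x) -> forall x, G x -> F x.

(* tight filters: closure of the ultrafilters in F(P), i.e. every basic
   open neighbourhood of F contains an ultrafilter *)
Definition is_tight (F : P -> Prop) : Prop :=
  is_filter F /\
  forall x xs, basicU x xs F -> exists G, is_ultrafilter G /\ basicU x xs G.

Definition Vb (x : P) (xs : seq P) (F : P -> Prop) : Prop :=
  is_tight F /\ basicU x xs F.
Definition V (x : P) : (P -> Prop) -> Prop := Vb x [::].

(* open subsets of T(P) (subspace topology) *)
Definition openT (U : (P -> Prop) -> Prop) : Prop :=
  (forall F, U F -> is_tight F) /\
  forall F, U F -> exists x xs, basicU x xs F /\
     forall G, is_tight G -> basicU x xs G -> U G.

Definition compactT (U : (P -> Prop) -> Prop) : Prop :=
  forall (I : Type) (O : I -> (P -> Prop) -> Prop),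
    (forall i, openT (O i)) ->
    (forall F, U F -> exists i, O i F) ->
    exists s : seq I, forall F, U F -> exists2 k, (k < size s)%N & (forall i0, O (nth i0 s k) F).

Definition Tc (U : (P -> Prop) -> Prop) : Prop := openT U /\ compactT U.

Definition fincover (x : P) (s : seq P) : Prop :=
  (forall z, z \in s -> z <= x) /\
  forall y, y != \bot -> y <= x -> exists2 z, z \in s & z `&` y != \bot.

End TightFilters.

(* P1 ⊆ P2: injective meet- and 0-preserving map *)
Definition semilattice_embedding d1 d2 (P1 : bMeetSemilatticeType d1)
  (P2 : bMeetSemilatticeType d2) (i : P1 -> P2) : Prop :=
  injective i /\ (forall x y, i (x `&` y) = i x `&` i y) /\ i \bot = \bot.

Definition downward_closed d1 d2 (P1 : bMeetSemilatticeType d1)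
  (P2 : bMeetSemilatticeType d2) (i : P1 -> P2) : Prop :=
  forall (x : P1) (y : P2), y <= i x -> exists z, i z = y.

Definition preserves_fincovers d1 d2 (P1 : bMeetSemilatticeType d1)
  (P2 : bMeetSemilatticeType d2) (i : P1 -> P2) : Prop :=
  forall (x : P1) (s : seq P1), fincover x s -> fincover (i x) (map i s).

(* the partial map re : T(P2) --> T(P1), xi |-> xi ∩ P1 (defined when nonempty) *)
Definition re d1 d2 (P1 : bMeetSemilatticeType d1)
  (P2 : bMeetSemilatticeType d2) (i : P1 -> P2) (xi : P2 -> Prop) : P1 -> Prop :=
  fun x => xi (i x).

Definition re_preimage d1 d2 (P1 : bMeetSemilatticeType d1)
  (P2 : bMeetSemilatticeType d2) (i : P1 -> P2) (U : (P1 -> Prop) -> Prop)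
  : (P2 -> Prop) -> Prop :=
  fun xi => is_tight xi /\ (exists x, xi (i x)) /\ U (re i xi).

From HB Require Import structures.
From mathcomp Require Import all_boot all_order.
From Stdlib Require List.
From Stdlib Require Import Classical FunctionalExtensionality PropExtensionality.
Import Order.Theory.
Local Open Scope order_scope.
Set Implicit Arguments. Unset Strict Implicit.

(** Since [P1] is downward closed, [re] and the upward closure [upset] of the
    image are mutually inverse bijections between the filters of [P1] and the
    filters of [P2] meeting [P1]; they preserve ultrafilters and tight filters
    and are continuous, so [T(P1)] is homeomorphic to the open subspace of
    [T(P2)] of tight filters meeting [P1], and [re^-1(U)] is the image of [U].
    The compact open subsets of an open subspace form an ideal: unions are
    clear, and for intersections one uses that [T(P2)] is Hausdorff, so
    compact sets are closed and a compact set meets a closed set in a compact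
    set. *)

Lemma pred_ext (T : Type) (A B : T -> Prop) : (forall x, A x <-> B x) -> A = B.
Proof.
by move=> AB; apply: functional_extensionality => x; apply: propositional_extensionality.
Qed.

Lemma exists_nth_In (I : Type) (A : I -> Prop) (s : seq I) :
  (exists2 k, (k < size s)%N & forall j0, A (nth j0 s k)) <->
  exists2 j, List.In j s & A j.
Proof.
elim: s => [|j s IH] /=; first by split=> -[].
split=> [[[|k] ks Ak]|[j' [<-|js] Aj']].
- by exists j; [left|exact: Ak].
- by have [|j' js Aj'] := proj1 IH; [exists k | exists j'; [right|]].
- by exists 0%N.
- by have [k ks Ak] := proj2 IH (ex_intro2 _ _ j' js Aj'); exists k.+1.
Qed.

Lemma In_pmap_Some (I : Type) (s : seq (option I)) j :
  List.In (Some j) s -> List.In j (pmap id s).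
Proof.
elim: s => //= -[a|] s IH /=; last by case=> // /IH.
by case=> [[->]|/IH]; [left|right].
Qed.

Section TightTopology.
Variables (d : Order.disp_t) (P : bMeetSemilatticeType d).
Implicit Types (F G H : P -> Prop) (A B C K N W : (P -> Prop) -> Prop).

Definition compactIn K :=
  forall (I : Type) (O : I -> (P -> Prop) -> Prop),
    (forall j, openT (O j)) -> (forall F, K F -> exists j, O j F) ->
    exists s : seq I, forall F, K F -> exists2 j, List.In j s & O j F.

Lemma compactTE K : compactT K <-> compactIn K.
Proof.
split=> cK I O oO /(cK I O oO) [s Hs]; exists s => F /Hs.
  exact: (proj1 (exists_nth_In (fun j => O j F) s)).
exact: (proj2 (exists_nth_In (fun j => O j F) s)).
Qed.

Lemma filter_not_bot F : is_filter F -> ~ F \bot.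
Proof. by move=> [_ [[y Fy] [up _]]] F0; apply/Fy/(up _ _ F0)/le0x. Qed.

Lemma openT_Vb x xs : openT (@Vb _ P x xs).
Proof. by split=> [F []|F [tF bF]] //; exists x, xs; split=> // G tG bG; split. Qed.

Lemma openT_tight : openT (@is_tight _ P).
Proof.
split=> // F tF; have [[z Fz] _] := tF.1.
by exists z, [::]; split=> //; split; [exact: tF.1|split].
Qed.

Lemma openT_local A :
  (forall F, A F -> exists N, [/\ openT N, N F & forall H, N H -> A H]) ->
  openT A.
Proof.
move=> loc; split=> F /loc [N [[tN oN] NF NA]]; first exact: tN.
have [x [xs [bF NU]]] := oN F NF.
by exists x, xs; split=> // G tG bG; apply/NA/NU.
Qed.

Lemma openT_union A B : openT A -> openT B -> openT (fun F => A F \/ B F).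
Proof.
by move=> oA oB; apply: openT_local => F [AF|BF];
  [exists A | exists B]; split=> // H; [left|right].
Qed.

Lemma openT_inter A B : openT A -> openT B -> openT (fun F => A F /\ B F).
Proof.
move=> [tA oA] [tB oB]; split=> [F [/tA] //|F [AF BF]].
have [x [xs [[fF [Fx nxs]] xA]]] := oA F AF.
have [y [ys [[_ [Fy nys]] yB]]] := oB F BF.
exists (x `&` y), (xs ++ ys); split.
  split=> //; split; first exact: fF.2.2.2.
  by move=> z; rewrite mem_cat => /orP [/nxs|/nys].
move=> G tG [fG [Gxy nG]]; have up := fG.2.2.1.
split; [apply: xA | apply: yB] => //; split=> //; split.
- exact: up Gxy (leIl _ _).
- by move=> z zs; apply: nG; rewrite mem_cat zs.
- exact: up Gxy (leIr _ _).
- by move=> z zs; apply: nG; rewrite mem_cat zs orbT.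
Qed.

Lemma openT_big_inter (J : Type) (A : J -> (P -> Prop) -> Prop) (s : seq J) :
  (forall j, openT (A j)) ->
  openT (fun H => is_tight H /\ forall j, List.In j s -> A j H).
Proof.
move=> oA; elim: s => [|j s IH].
  have -> : (fun H => is_tight H /\ forall j, List.In j [::] -> A j H) =
            @is_tight _ P by apply: pred_ext => H; split=> [[]|].
  exact: openT_tight.
have -> : (fun H => is_tight H /\ forall k, List.In k (j :: s) -> A k H) =
          fun H => A j H /\ (is_tight H /\ forall k, List.In k s -> A k H).
  apply: pred_ext => H; split=> [[tH Hs]|[Aj [tH Hs]]].
    by split; [apply: Hs; left | split=> // k ks; apply: Hs; right].
  by split=> // k [<-|/Hs].
exact: openT_inter.
Qed.

Lemma separated_at F G y : is_tight F -> is_tight G -> G y -> ~ F y ->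
  exists N M, [/\ openT N, openT M, N F, M G & forall H, N H -> ~ M H].
Proof.
move=> tF tG Gy nFy; have [[z Fz] _] := tF.1.
exists (Vb z [:: y]), (Vb y [::]); split; try exact: openT_Vb.
- by split=> //; split; [exact: tF.1|split=> // u; rewrite inE => /eqP ->].
- by split=> //; split; [exact: tG.1|split].
- by move=> H [_ [_ [_ nHy]]] [_ [_ [Hy _]]]; apply: nHy Hy; rewrite inE.
Qed.

Lemma tight_separated F G : is_tight F -> is_tight G -> F <> G ->
  exists N M, [/\ openT N, openT M, N F, M G & forall H, N H -> ~ M H].
Proof.
move=> tF tG FG.
have [y nFGy] : exists y, ~ (F y <-> G y).
  by apply: not_all_ex_not => FGe; apply/FG/pred_ext.
case: (classic (F y)) => Fy.
  have [|N [M [oN oM NG MF NM]]] := separated_at tG tF Fy; first tauto.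
  by exists M, N; split=> // H MH NH; exact: NM NH MH.
by apply: (separated_at tF tG _ Fy); tauto.
Qed.

Lemma compactIn_union A B :
  compactIn A -> compactIn B -> compactIn (fun F => A F \/ B F).
Proof.
move=> cA cB I O oO cov.
have [sA HA] := cA I O oO (fun F AF => cov F (or_introl AF)).
have [sB HB] := cB I O oO (fun F BF => cov F (or_intror BF)).
exists (sA ++ sB)%list => F [/HA|/HB] [j js Oj]; exists j => //;
  apply: List.in_or_app; [left|right] => //.
Qed.

Lemma compactIn_inter_closed K C :
  compactIn K -> (forall F, K F -> is_tight F) ->
  openT (fun F => is_tight F /\ ~ C F) -> compactIn (fun F => K F /\ C F).
Proof.
move=> cK tK oC I O oO cov.
pose O' (j : option I) := if j is Some j then O j else fun F => is_tight F /\ ~ C F.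
have [|F KF|s Hs] := cK _ O'; first by case.
  case: (classic (C F)) => CF; last by exists None; split; [exact: tK|].
  by have [j Oj] := cov F (conj KF CF); exists (Some j).
exists (pmap id s) => F [/Hs [[j|] js Oj] CF]; last by case: Oj.
by exists j => //; apply: In_pmap_Some.
Qed.

(** [T(P)] is Hausdorff, hence its compact subsets are closed. *)
Lemma compact_closed W : compactIn W -> (forall F, W F -> is_tight F) ->
  openT (fun F => is_tight F /\ ~ W F).
Proof.
move=> cW tW; apply: openT_local => F [tF nWF].
pose I := {NM : ((P -> Prop) -> Prop) * ((P -> Prop) -> Prop) |
  [/\ openT NM.1, openT NM.2, NM.1 F & forall H, NM.1 H -> ~ NM.2 H]}.
have [[[N M] []] //|G WG|s Hs] := cW I (fun j => (sval j).2).
  have FG : F <> G by move=> FGe; apply: nWF; rewrite FGe.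
  have [N [M [oN oM NF MG NM]]] := tight_separated tF (tW G WG) FG.
  by exists (exist _ (N, M) (And4 oN oM NF NM)).
exists (fun H => is_tight H /\ forall j, List.In j s -> (sval j).1 H); split.
- by apply: openT_big_inter => -[[N M] []].
- by split=> // -[[N M] []].
- move=> H [tH Ns]; split=> // /Hs [j js MH].
  by case: (proj2_sig j) => _ _ _ NM; apply: NM H (Ns _ js) MH.
Qed.

Lemma Tc_union A B : Tc A -> Tc B -> Tc (fun F => A F \/ B F).
Proof.
move=> [oA /compactTE cA] [oB /compactTE cB].
by split; [exact: openT_union | apply/compactTE/compactIn_union].
Qed.

End TightTopology.

Section DownwardClosedEmbedding.
Variables (d1 d2 : Order.disp_t).
Variables (P1 : bMeetSemilatticeType d1) (P2 : bMeetSemilatticeType d2).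
Variable i : P1 -> P2.
Hypotheses (i_inj : injective i) (i_meet : {morph i : x y / x `&` y}).
Hypotheses (i_bot : i \bot = \bot) (i_down : downward_closed i).
Implicit Types (eta G : P1 -> Prop) (xi : P2 -> Prop).
Implicit Types (U : (P1 -> Prop) -> Prop) (W : (P2 -> Prop) -> Prop).

Lemma le_emb a b : (i a <= i b) = (a <= b).
Proof. by rewrite !leEmeet -i_meet (inj_eq i_inj). Qed.

Lemma emb_eq0 a : (i a == \bot) = (a == \bot).
Proof. by rewrite -i_bot (inj_eq i_inj). Qed.

Lemma downward_preserves_fincovers : preserves_fincovers i.
Proof.
move=> x s [sx cov]; split=> [_ /mapP [a /sx ax ->]|y ny yx].
  by rewrite le_emb.
have [b Eb] := i_down yx; subst y; rewrite emb_eq0 in ny.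
have [|a as_ ab] := cov b ny; first by rewrite -le_emb.
by exists (i a); [exact: map_f | rewrite -i_meet emb_eq0].
Qed.

Definition upset eta : P2 -> Prop := fun z => exists2 w, eta w & i w <= z.

Lemma downward_meet_seq w (zs : seq P2) :
  exists ys, map i ys = [seq z `&` i w | z <- zs].
Proof.
elim: zs => [|z zs [ys E]]; first by exists [::].
by have [y Ey] := i_down (leIr (i w) z); exists (y :: ys); rewrite /= E Ey.
Qed.

Lemma filter_upset eta : is_filter eta -> is_filter (upset eta).
Proof.
move=> fe; have [[w ew] [_ [up mt]]] := fe.
split; first by exists (i w), w.
split.
  exists \bot => -[w' ew']; rewrite le_eqVlt ltx0 orbF -i_bot => /eqP/i_inj w'0.
  by apply: (filter_not_bot fe); rewrite -w'0.
split=> [z z' [w' ew' le] zz'|z z' [a ea la] [b eb lb]].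
  by exists w' => //; apply: le_trans zz'.
by exists (a `&` b); [exact: mt | rewrite i_meet leI2].
Qed.

Lemma filter_re xi x : is_filter xi -> xi (i x) -> is_filter (re i xi).
Proof.
move=> fx xix; have [_ [_ [up mt]]] := fx.
split; first by exists x.
split; first by exists \bot; rewrite /re i_bot; exact: filter_not_bot.
split=> [a b xa ab|a b]; last by rewrite /re i_meet; exact: mt.
by apply: up xa _; rewrite le_emb.
Qed.

Lemma re_upset eta : is_filter eta -> re i (upset eta) = eta.
Proof.
move=> [_ [_ [up _]]]; apply: pred_ext => a; split=> [[w ew]|ea].
  by rewrite le_emb; exact: up.
by exists a.
Qed.

Lemma upset_re xi x : is_filter xi -> xi (i x) -> upset (re i xi) = xi.
Proof.
move=> [_ [_ [up mt]]] xix; apply: pred_ext => z; split=> [[w xw]|xz].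
  exact: up.
have [w Ew] := i_down (leIr (i x) z).
by exists w; rewrite /re Ew ?leIl //; exact: mt.
Qed.

Lemma ultra_upset eta : is_ultrafilter eta -> is_ultrafilter (upset eta).
Proof.
move=> [fe maxe]; split=> [|xi fxi sub z xiz]; first exact: filter_upset.
have [w ew] := fe.1; have xiw : xi (i w) by apply: sub; exists w.
have ere : forall a, re i xi a -> eta a.
  by apply: (maxe _ (filter_re fxi xiw)) => a ea; apply: sub; exists a.
have [v Ev] := i_down (leIr (i w) z).
by exists v; rewrite ?Ev ?leIl //; apply: ere; rewrite /re Ev; exact: fxi.2.2.2.
Qed.

Lemma ultra_re xi x : is_ultrafilter xi -> xi (i x) -> is_ultrafilter (re i xi).
Proof.
move=> [fxi maxxi] xix; split=> [|G fG sub a Ga]; first exact: filter_re xix.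
apply: (maxxi _ (filter_upset fG)) => [z xiz|]; last by exists a.
have [w Ew] := i_down (leIr (i x) z).
by exists w; rewrite ?Ew ?leIl //; apply: sub; rewrite /re Ew; exact: fxi.2.2.2.
Qed.

Lemma basicU_upset eta z zs : is_filter eta -> basicU z zs (upset eta) ->
  exists w ys, basicU w ys eta /\
    forall G, basicU w ys G -> basicU z zs (upset G).
Proof.
move=> fe [_ [[w ew wz] nzs]]; have [ys E] := downward_meet_seq w zs.
exists w, ys; split.
  split=> //; split=> // y ys_y ey.
  have : i y \in map i ys by exact: map_f.
  rewrite E => /mapP [z' z's Ey]; apply: (nzs z' z's).
  by exists y; rewrite ?Ey ?leIl.
move=> G [fG [Gw nys]]; split; first exact: filter_upset.
split; first by exists w.
move=> z' z's [g Gg gz'].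
have : z' `&` i w \in map i ys by rewrite E; exact: (map_f (fun z => z `&` i w)).
case/mapP=> y ys_y Ey; apply: (nys y ys_y).
have : g `&` w <= y by rewrite -le_emb -Ey i_meet leI2.
by apply: fG.2.2.1; exact: fG.2.2.2.
Qed.

Lemma tight_upset eta : is_tight eta -> is_tight (upset eta).
Proof.
move=> [fe te]; split=> [|z zs /(basicU_upset fe) [w [ys [bw up]]]].
  exact: filter_upset.
by have [G [uG /up bG]] := te _ _ bw; exists (upset G); split; [exact: ultra_upset|].
Qed.

Lemma tight_re xi x : is_tight xi -> xi (i x) -> is_tight (re i xi).
Proof.
move=> [fxi txi] xix; split=> [|a as_ [_ [ea nas]]]; first exact: filter_re xix.
have [|G [uG [_ [Ga nG]]]] := txi (i a) (map i as_).
  by split=> //; split=> // _ /mapP [b bs ->]; exact: nas.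
exists (re i G); split; first exact: ultra_re Ga.
split; first exact: filter_re uG.1 Ga.
by split=> // b bs; apply: nG; exact: map_f.
Qed.

Lemma openT_re_preimage U : openT U -> openT (re_preimage i U).
Proof.
move=> [tU oU]; split=> [xi []|xi [txi [[x0 _] /oU [x [xs [bx Ux]]]]]] //.
have [_ [rx nxs]] := bx.
exists (i x), (map i xs); split.
  by split; [exact: txi.1 | split=> // _ /mapP [b bs ->]; exact: nxs].
move=> G tG [fG [Gx nG]]; split=> //; split; first by exists x.
apply: Ux; first exact: tight_re Gx.
split; first exact: filter_re Gx.
by split=> // b bs; apply: nG; exact: map_f.
Qed.

Lemma openT_upset_preimage W : openT W ->
  openT (fun eta => is_tight eta /\ W (upset eta)).
Proof.
move=> [tW oW]; split=> [eta []|eta [te /oW [z [zs [bz Wz]]]]] //.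
have [w [ys [bw up]]] := basicU_upset te.1 bz.
exists w, ys; split=> // G tG /up bG; split=> //.
by apply: Wz; first exact: tight_upset.
Qed.

Lemma re_preimage_upset U eta :
  is_tight eta -> re_preimage i U (upset eta) <-> U eta.
Proof.
move=> te; rewrite /re_preimage re_upset; last exact: te.1.
have [[w ew] _] := te.1.
by split=> [[_ []]|Ue] //; split; [exact: tight_upset | split=> //; exists w, w].
Qed.

Lemma re_preimageE U : (forall eta, U eta -> is_tight eta) ->
  re_preimage i U = fun xi => exists2 eta, U eta & xi = upset eta.
Proof.
move=> tU; apply: pred_ext => xi; split=> [[txi [[x xix] Uxi]]|[eta Ue ->]].
  by exists (re i xi); rewrite // (upset_re txi.1 xix).
by apply/re_preimage_upset/Ue; exact: tU.
Qed.

Lemma compactIn_image (f : (P1 -> Prop) -> P2 -> Prop) U :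
  compactIn U -> (forall eta, U eta -> is_tight eta) ->
  (forall W, openT W -> openT (fun eta => is_tight eta /\ W (f eta))) ->
  compactIn (fun xi => exists2 eta, U eta & xi = f eta).
Proof.
move=> cU tU f_cont I O oO cov.
have [|eta Ue|s Hs] := cU I (fun j eta => is_tight eta /\ O j (f eta)).
- by move=> j; exact: f_cont.
- have [j Oj] := cov (f eta) (ex_intro2 _ _ eta Ue erefl).
  by exists j; split; [exact: tU|].
- by exists s => _ [eta /Hs [j js [_ Oj]] ->]; exists j.
Qed.

Lemma Tc_re_preimage U : Tc U -> Tc (re_preimage i U).
Proof.
move=> [oU /compactTE cU]; split; first exact: openT_re_preimage.
apply/compactTE; rewrite re_preimageE; last exact: oU.1.
apply: (compactIn_image (f := upset)) => //; first exact: oU.1.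
exact: openT_upset_preimage.
Qed.

Lemma re_preimage_inj U U' : Tc U -> Tc U' ->
  re_preimage i U = re_preimage i U' -> U = U'.
Proof.
have sub A B : (forall eta, A eta -> is_tight eta) ->
    re_preimage i A = re_preimage i B -> forall eta, A eta -> B eta.
  move=> tA AB eta Ae; have te := tA eta Ae.
  by rewrite -(re_preimage_upset _ te) -AB re_preimage_upset.
move=> [[tU _] _] [[tU' _] _] UU'; apply: pred_ext => eta.
by split; [exact: sub | apply: sub tU' (esym UU') eta].
Qed.

Lemma Tc_inter_upset U W : Tc U -> Tc W ->
  Tc (fun eta => U eta /\ W (upset eta)).
Proof.
move=> [oU /compactTE cU] [oW /compactTE cW]; split.
  have -> : (fun eta => U eta /\ W (upset eta)) =
            fun eta => U eta /\ (is_tight eta /\ W (upset eta)).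
    by apply: pred_ext => eta; split=> [[Ue We]|[Ue [_ We]]]; do 2?split=> //;
      exact: oU.1.
  by apply: openT_inter; last exact: openT_upset_preimage.
apply/compactTE/compactIn_inter_closed => //; first exact: oU.1.
have -> : (fun eta => is_tight eta /\ ~ W (upset eta)) =
  fun eta => is_tight eta /\ (is_tight (upset eta) /\ ~ W (upset eta)).
  by apply: pred_ext => eta; split=> [[te nW]|[te [_ nW]]]; do 2?split=> //;
    exact: tight_upset.
apply: (openT_upset_preimage (W := fun xi => is_tight xi /\ ~ W xi)).
by apply: compact_closed => //; exact: oW.1.
Qed.

Lemma re_preimage_inter_upset U W :
  re_preimage i (fun eta => U eta /\ W (upset eta)) =
  fun xi => re_preimage i U xi /\ W xi.
Proof.
apply: pred_ext => xi; rewrite /re_preimage.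
split=> [[txi [[x xix] [Ure]]]|[[txi [[x xix] Ure]]]];
  rewrite (upset_re txi.1 xix); do ?split=> //; by exists x.
Qed.

Lemma re_preimage_V x : re_preimage i (V x) = V (i x).
Proof.
apply: pred_ext => xi; split=> [[txi [_ [_ [_ [xix _]]]]]|[txi [fxi [xix _]]]].
  by split=> //; split; [exact: txi.1 | split].
split=> //; split; first by exists x.
by split; [exact: tight_re xix | split; [exact: filter_re xix | split]].
Qed.

End DownwardClosedEmbedding.

Theorem mainTheorem10 (d1 d2 : Order.disp_t)
  (P1 : bMeetSemilatticeType d1) (P2 : bMeetSemilatticeType d2) (i : P1 -> P2) :
  semilattice_embedding i -> downward_closed i ->
  preserves_fincovers i /\
      (forall xi, is_tight xi -> (exists x, xi (i x)) -> is_tight (re i xi)) /\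
      (forall U, Tc U -> Tc (re_preimage i U)) /\
      (forall U U', Tc U -> Tc U' -> re_preimage i U = re_preimage i U' -> U = U') /\
      (forall U U', Tc U -> Tc U' -> exists2 W, Tc W &
          re_preimage i W = (fun xi => re_preimage i U xi \/ re_preimage i U' xi)) /\
      (forall U W, Tc U -> Tc W -> exists2 U', Tc U' &
          re_preimage i U' = (fun xi => re_preimage i U xi /\ W xi)) /\
      (forall x : P1, re_preimage i (V x) = V (i x)).
Proof.
move=> [i_inj [i_meet i_bot]] i_down.
split; first exact: downward_preserves_fincovers.
split; first by move=> xi txi [x xix]; exact: tight_re xix.
split; first exact: Tc_re_preimage.
split; first exact: re_preimage_inj.
split.
  move=> U U' TU TU'; exists (fun eta => U eta \/ U' eta); first exact: Tc_union.
  by apply: pred_ext => xi; rewrite /re_preimage; tauto.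
split; last exact: re_preimage_V.
move=> U W TU TW; exists (fun eta => U eta /\ W (upset i eta)).
  exact: Tc_inter_upset.
exact: re_preimage_inter_upset.
Qed.
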